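(* Let $A\in\mathbb{R}_+^{n\times n}$ and let $x\in\mathbb{R}_+^n$ be a Perron eigenvector of $A$. Then: (1) if for all $1\le i,j,k\le n$, $x_k<x_j$ implies $a_{i,k}\le a_{i,j}$, then $\rho(A)=\max_{B\in\Omega(A)}\rho(B)$; (2) if for all $1\le i,j,k\le n$, $x_k<x_j$ implies $a_{i,k}\ge a_{i,j}$, then $\rho(A)=\min_{B\in\Omega(A)}\rho(B)$.
   Context: For $A=(a_{i,j})\in\mathbb{R}_+^{n\times n}$ (nonnegative $n\times n$ matrices), $\Omega(A)=\{B\in\mathbb{R}_+^{n\times n}:\ \forall i\ \exists\text{ a permutation }\phi_i\text{ of }\{1,\dots,n\}\text{ with } b_{i,j}=a_{i,\phi_i(j)}\ \forall j\}$. $\rho(B)$ denotes the spectral radius (Perron root) of $B$. A Perron eigenvector of $A$ is a nonzero nonnegative vector $x$ with $Ax=\rho(A)x$. *)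

From HB Require Import structures.
From mathcomp Require Import all_boot all_order all_algebra all_fingroup.
From mathcomp Require Import reals.
From mathcomp.real_closed Require Import complex.
Set Implicit Arguments. Unset Strict Implicit. Unset Printing Implicit Defensive.
Import Order.TTheory GRing.Theory Num.Theory.
Local Open Scope ring_scope.

Section Spectral.
Variable R : realType.
Variable n : nat.

Definition nonneg_mx (A : 'M[R]_n) : Prop := forall i j, 0 <= A i j.

Definition complexify (A : 'M[R]_n) : 'M[R[i]]_n := map_mx (fun x => x%:C%C) A.

(* the (complex) eigenvalues of A with multiplicity: a sequence r with
   char_poly A = \prod_(z <- r) ('X - z) over the algebraically closed R[i] *)
Definition eigenvalues (A : 'M[R]_n) : seq R[i] :=
  sval (closed_field_poly_normal (char_poly (complexify A))).

Definition spectral_radius (A : 'M[R]_n) : R :=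
  \big[Num.max/0]_(z <- eigenvalues A) ComplexField.Normc.normc z.

Definition perron_eigenvector (A : 'M[R]_n) (x : 'cV[R]_n) : Prop :=
  x != 0 /\ (forall i, 0 <= x i 0) /\ A *m x = spectral_radius A *: x.

Definition in_Omega (A B : 'M[R]_n) : Prop :=
  nonneg_mx B /\ forall i : 'I_n, exists phi : 'S_n, forall j, B i j = A i (phi j).

End Spectral.

From HB Require Import structures.
From mathcomp Require Import all_boot all_order all_algebra all_fingroup.
From mathcomp Require Import reals ring lra.
From mathcomp.real_closed Require Import complex.
Import Order.TTheory GRing.Theory Num.Theory ComplexField.Normc.
Set Implicit Arguments.
Unset Strict Implicit.
Unset Printing Implicit Defensive.

Local Open Scope ring_scope.

(* Row i of B x, for B in Omega(A), is a sum A i (s j) * x_j over a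
   permutation s, so the rearrangement inequality compares it with
   (A x)_i = rho(A) x_i: the ordering hypothesis of (1) gives B x <= rho(A) x
   and that of (2) gives B x >= rho(A) x.  Collatz-Wielandt bounds turn these
   into rho(B) <= rho(A) and rho(B) >= rho(A).  The upper bound pairs x with
   the modulus of a left eigenvector of B; since x may have zero entries it
   also uses that, under (1), the rows of A (hence of B) vanish where x does.
   The lower bound compares the growth l^k of B^k x with the bound
   K (rho(B) + e)^k on the powers of B, obtained by scaling a Schur
   triangularisation of B with a diagonal similarity. *)

Section Rearrangement.
Variables (R : realDomainType) (n : nat).
Implicit Types (a x : 'I_n -> R) (s : 'S_n).

Local Notation moved s := #|[pred y | s y != y]|.

Lemma sum_tpermM a x s j c : c != j ->
  \sum_y a ((tperm j c * s)%g y) * x y =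
  \sum_y a (s y) * x y + (a (s c) - a (s j)) * (x j - x c).
Proof.
move=> cj.
have split_jc (F : 'I_n -> R) :
    \sum_y F y = F j + F c + \sum_(y | (y != j) && (y != c)) F y.
  by rewrite (bigD1 j) //= (bigD1 c) /= 1?addrA // cj.
rewrite split_jc [X in _ = X + _]split_jc !permM tpermL tpermR.
rewrite (eq_bigr (fun y => a (s y) * x y)); last first.
  by move=> y /andP [yj yc]; rewrite permM tpermD // eq_sym.
ring.
Qed.

Lemma moved_tpermM s j c f : s j != j -> s c != c -> f \in [:: j; c] ->
  (tperm j c * s)%g f = f -> (moved (tperm j c * s)%g < moved s)%N.
Proof.
move=> sj sc f_jc sf.
have s_f : s f != f by move: f_jc; rewrite !inE => /orP [] /eqP ->.
rewrite (cardD1 f [pred y | s y != y]) inE s_f add1n ltnS.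
apply: subset_leq_card; apply/subsetP => y; rewrite !inE => s'y.
apply/andP; split; first by apply: contraNneq s'y => ->; rewrite sf.
have [->|yj] := eqVneq y j => //; have [->|yc] := eqVneq y c => //.
by move: s'y; rewrite permM tpermD // eq_sym.
Qed.

(* Swapping two values of [s] at points of largest [x] among the moved ones
   fixes one more point without decreasing the sum. *)
Lemma rearrangement_step a x s :
    (forall j k, x k < x j -> a k <= a j) -> s != 1%g ->
  exists2 s' : 'S_n, (moved s' < moved s)%N &
    \sum_y a (s y) * x y <= \sum_y a (s' y) * x y.
Proof.
move=> ord /eqP s_neq1.
have [y0 sy0] : exists y0, s y0 != y0.
  apply/existsP; apply: contra_notT s_neq1; rewrite negb_exists => /forallP sfix.
  by apply/permP => y; rewrite perm1; apply/eqP; rewrite -[_ == _]negbK sfix.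
have [j sj jmax] := @Order.TotalTheory.arg_maxP _ _ _ y0 [pred y | s y != y] x sy0.
set k := (s^-1)%g j; set p := s j.
have s_k : s k = j by rewrite permKV.
have jk : j != k by apply: contraNneq sj => jk; rewrite {1}jk s_k.
have sk : s k != k by rewrite s_k.
have sp : s p != p by apply: contraNneq sj => /(@perm_inj _ s) /eqP.
have [xp_lt|xp_ge] := ltP (x p) (x j).
  exists (tperm j k * s)%g.
    by apply: (@moved_tpermM s j k j sj sk); rewrite ?inE ?eqxx // permM tpermL s_k.
  rewrite sum_tpermM 1?eq_sym //.
  rewrite s_k lerDl mulr_ge0 // subr_ge0; first exact: ord.
  exact: jmax.
exists (tperm j p * s)%g.
  by apply: (@moved_tpermM s j p p sj sp); rewrite ?inE ?eqxx ?orbT // permM tpermR.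
have xp : x p = x j by apply: le_anti; rewrite xp_ge andbT; exact: jmax.
by rewrite sum_tpermM // xp subrr mulr0 addr0.
Qed.

Lemma rearrangement_le a x s : (forall j k, x k < x j -> a k <= a j) ->
  \sum_j a (s j) * x j <= \sum_j a j * x j.
Proof.
move=> ord; elim: {s}(moved s).+1 {-2}s (ltnSn (moved s)) => // m IHm s s_m.
have [->|s_neq1] := eqVneq s 1%g; first by under eq_bigr do rewrite perm1.
have [s' s'_lt le_s'] := @rearrangement_step a x s ord s_neq1.
exact: le_trans le_s' (IHm s' (leq_trans s'_lt s_m)).
Qed.

Lemma rearrangement_ge a x s : (forall j k, x k < x j -> a j <= a k) ->
  \sum_j a j * x j <= \sum_j a (s j) * x j.
Proof.
move=> ord; rewrite -lerN2 -!sumrN.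
under eq_bigr do rewrite -mulNr; under [X in _ <= X]eq_bigr do rewrite -mulNr.
by apply: (@rearrangement_le (fun j => - a j)) => j k /ord; rewrite lerN2.
Qed.

End Rearrangement.

Section ComplexModulus.
Variable R : rcfType.
Implicit Types z : R[i].

Lemma normc_ge0 z : 0 <= normc z.
Proof. exact: (@normr_ge0 _ (Rcomplex R)). Qed.

Lemma normc_eq0 z : (normc z == 0) = (z == 0).
Proof. exact: (@normr_eq0 _ (Rcomplex R)). Qed.

Lemma normc_real (a : R) : normc a%:C%C = `|a|.
Proof. by rewrite /normc /= expr0n addr0 sqrtr_sqr. Qed.

Lemma ler_normc_sum (I : Type) (r : seq I) (F : I -> R[i]) :
  normc (\sum_(i <- r) F i) <= \sum_(i <- r) normc (F i).
Proof. exact: (@ler_norm_sum _ (Rcomplex R)). Qed.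

End ComplexModulus.

Section ColumnNorm.
Variables (R : rcfType) (n : nat).
Implicit Types (M : 'M[R[i]]_n) (v : 'cV[R[i]]_n).

Definition vnorm1 v : R := \sum_i normc (v i 0).

Definition colnorm1 M j : R := \sum_i normc (M i j).

Lemma colnorm1_ge0 M j : 0 <= colnorm1 M j.
Proof. by apply: sumr_ge0 => i _; exact: normc_ge0. Qed.

Lemma normc_le_vnorm1 v i : normc (v i 0) <= vnorm1 v.
Proof.
by rewrite /vnorm1 (bigD1 i) //= lerDl sumr_ge0 // => j _; exact: normc_ge0.
Qed.

Lemma vnorm1_mulmx_le M v q : (forall j, colnorm1 M j <= q) ->
  vnorm1 (M *m v) <= q * vnorm1 v.
Proof.
move=> le_q; rewrite /vnorm1 mulr_sumr.
apply: (le_trans (y := \sum_i \sum_j normc (M i j) * normc (v j 0))).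
  apply: ler_sum => i _; rewrite mxE; apply: le_trans (ler_normc_sum _ _) _.
  by apply: ler_sum => j _; rewrite normcM.
rewrite exchange_big; apply: ler_sum => j _.
by rewrite -mulr_suml ler_wpM2r ?normc_ge0 //; exact: le_q.
Qed.

End ColumnNorm.

Section TriangularScaling.
Variables (R : rcfType) (n : nat).
Implicit Types (T : 'M[R[i]]_n) (d : R[i]).

Definition diag_pow d : 'M[R[i]]_n := diag_mx (\row_(k < n) d ^+ k).

Lemma diag_powVK d : d != 0 -> diag_pow d^-1 *m diag_pow d = 1%:M.
Proof.
move=> d_neq0; apply/matrixP => i j; rewrite mul_diag_mx !mxE.
have [->|ij] := eqVneq i j; last by rewrite !mulr0n mulr0.
by rewrite !mulr1n exprVn mulVf // expf_neq0.
Qed.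

(* Conjugating by [diag(d^k)] multiplies the entries below the diagonal by
   powers of [d], so a small [d] pushes every column norm down to the modulus
   of the diagonal entry. *)
Lemma trig_colnorm1_scaling T r q : is_trig_mx T ->
    (forall j, normc (T j j) <= r) -> r < q ->
  exists2 d, d != 0 & forall j, colnorm1 (diag_pow d *m T *m diag_pow d^-1) j <= q.
Proof.
move=> /is_trig_mxP T_trig le_r r_lt_q.
pose K := \big[Num.max/0]_j colnorm1 T j.
have K_ge0 : 0 <= K := bigmax_ge_id _ _ _ _.
pose e := Num.min 1 ((q - r) / (K + 1)).
have e_gt0 : 0 < e by rewrite lt_min ltr01 divr_gt0 // ?subr_gt0 // ltr_wpDl.
have e_ge0 := ltW e_gt0.
have e_le1 : e <= 1 by rewrite ge_min lexx.
have eK_le : e * K <= q - r.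
  apply: (le_trans (y := e * (K + 1))); first by rewrite ler_wpM2l // lerDl.
  by rewrite -ler_pdivlMr ?ltr_wpDl // ge_min lexx orbT.
exists e%:C%C => [|j]; first by rewrite eq_complex /= negb_and gt_eqF.
have entry i : normc ((diag_pow e%:C%C *m T *m diag_pow e%:C%C^-1) i j) <=
    (i == j)%:R * normc (T j j) + e * normc (T i j).
  rewrite mul_mx_diag mul_diag_mx !mxE !normcM -fmorphV -!rmorphXn !normc_real.
  rewrite !ger0_norm ?exprn_ge0 ?invr_ge0 // exprVn.
  have [ij|ji] := boolP (i < j)%N.
    by rewrite T_trig // normc0 !mulr0 mul0r addr0 mulr_ge0 ?normc_ge0.
  have [<-|ij] := eqVneq j i.
    rewrite mulr1n mul1r mulrAC divff ?mul1r ?expf_neq0 ?gt_eqF //.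
    by rewrite lerDl mulr_ge0 ?normc_ge0.
  have {ji ij} ji : (j < i)%N by rewrite ltn_neqAle ij leqNgt.
  rewrite mulr0n mul0r add0r mulrAC -expfB // ler_wpM2r ?normc_ge0 //.
  by rewrite -[leRHS]expr1 ler_wiXn2l // subn_gt0.
apply: le_trans (ler_sum _ (fun i _ => entry i)) _.
rewrite big_split /= -mulr_sumr (bigD1 j) //= eqxx mul1r big1 ?addr0; last first.
  by move=> i /negbTE ->; rewrite mul0r.
have eT_le : e * colnorm1 T j <= e * K by rewrite ler_wpM2l // le_bigmax.
by move: (le_r j) eT_le eK_le; rewrite /colnorm1; lra.
Qed.

End TriangularScaling.

Arguments diag_pow {R n} d.

Section PowerGrowth.
Variables (R : rcfType) (n : nat).
Implicit Types (M : 'M[R[i]]_n).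

Lemma similar_colnorm1_le M r q : (0 < n)%N ->
    (forall z, root (char_poly M) z -> normc z <= r) -> r < q ->
  exists S T : 'M[R[i]]_n,
    [/\ S \in unitmx, S *m M = T *m S & forall j, colnorm1 T j <= q].
Proof.
move=> n_gt0 le_r r_lt_q; have [P P_unitary P_trig] := Schur M n_gt0.
have P_unit := unitarymx_unit P_unitary.
set T0 := conjmx P M in P_trig; have T0_trig : is_trig_mx T0 := P_trig.
have PM : P *m M = T0 *m P := similarPp (stablemx_unit _ P_unit) (eqxx _).
have T0_diag j : normc (T0 j j) <= r.
  apply: le_r; rewrite -eigenvalue_root_char.
  apply: (eigenvalue_conjmx (stablemx_unit M P_unit)); first by rewrite row_free_unit.
  rewrite [_ \in _]eigenvalue_root_char char_poly_trig // rootE horner_prod.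
  by rewrite (bigD1 j) //= !hornerE subrr mul0r.
clearbody T0.
have [d d_neq0 colT] := trig_colnorm1_scaling T0_trig T0_diag r_lt_q.
have dVd := diag_powVK n d_neq0.
exists (diag_pow d *m P), (diag_pow d *m T0 *m diag_pow d^-1); split => //.
  by rewrite unitmx_mul P_unit andbT; case: (mulmx1_unit dVd).
by rewrite -mulmxA PM !mulmxA -(mulmxA _ _ (diag_pow d)) dVd mulmx1.
Qed.

Lemma iter_mulmx_normc_le M r q (v : 'cV[R[i]]_n) :
    (forall z, root (char_poly M) z -> normc z <= r) -> r < q ->
  exists K, forall k i, normc ((iter k (mulmx M) v) i 0) <= K * q ^+ k.
Proof.
move=> le_r r_lt_q; have [n0|n_gt0] := posnP n.
  by exists 0 => k i; have := ltn_ord i; rewrite {2}n0.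
have [S [T [S_unit SM colT]]] := similar_colnorm1_le n_gt0 le_r r_lt_q.
have q_ge0 : 0 <= q := le_trans (colnorm1_ge0 _ _) (colT (Ordinal n_gt0)).
pose KS := \big[Num.max/0]_j colnorm1 (invmx S) j.
exists (KS * vnorm1 (S *m v)) => k i.
have Sk : S *m iter k (mulmx M) v = iter k (mulmx T) (S *m v).
  by elim: k => //= k <-; rewrite !mulmxA SM.
have vk : vnorm1 (iter k (mulmx T) (S *m v)) <= q ^+ k * vnorm1 (S *m v).
  elim: k {Sk} => [|k IHk]; first by rewrite expr0 mul1r.
  apply: le_trans (vnorm1_mulmx_le _ colT) _.
  by rewrite exprS -mulrA ler_wpM2l.
rewrite -[iter _ _ _](mulKmx S_unit) Sk.
apply: le_trans (normc_le_vnorm1 _ _) _.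
apply: le_trans (vnorm1_mulmx_le _ (fun j => le_bigmax 0 _ j)) _.
by rewrite -mulrA [_ * q ^+ k]mulrC ler_wpM2l ?bigmax_ge_id.
Qed.

End PowerGrowth.

Lemma bernoulli_le (R : realDomainType) (p : R) k :
  1 <= p -> 1 + k%:R * (p - 1) <= p ^+ k.
Proof.
move=> p_ge1; elim: k => [|k IHk]; first by rewrite mul0r addr0 expr0.
have p_ge0 : 0 <= p by apply: le_trans p_ge1.
rewrite exprS; apply: le_trans (ler_wpM2l p_ge0 IHk).
have : 0 <= k%:R * ((p - 1) * (p - 1)) :> R by rewrite mulr_ge0 ?ler0n ?mulr_ge0 ?subr_ge0.
by rewrite -natr1; nra.
Qed.

Lemma ler_geometric (R : archiFieldType) (c K l q : R) : 0 < c -> 0 < q ->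
  (forall k, c * l ^+ k <= K * q ^+ k) -> l <= q.
Proof.
move=> c_gt0 q_gt0 bound; rewrite leNgt; apply/negP => q_lt_l.
pose p := l / q.
have p_gt1 : 1 < p by rewrite ltr_pdivlMr // mul1r.
have cp_le k : c * p ^+ k <= K.
  by rewrite /p exprMn exprVn mulrA ler_pdivrMr ?exprn_gt0.
pose k := Num.Def.archi_bound (K / (c * (p - 1))).
have cp1_gt0 : 0 < c * (p - 1) by rewrite mulr_gt0 // subr_gt0.
have : K / (c * (p - 1)) < k%:R.
  apply: archi_boundP; rewrite divr_ge0 ?(ltW cp1_gt0) //.
  by apply: le_trans (cp_le 0%N); rewrite expr0 mulr1 ltW.
rewrite ltr_pdivrMr // ltNge => /negP; apply.
apply: le_trans (cp_le k); rewrite mulrCA ler_wpM2l ?(ltW c_gt0) //.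
by apply: le_trans (bernoulli_le k (ltW p_gt1)); rewrite lerDr.
Qed.

Section SpectralRadius.
Variables (R : realType) (n : nat).
Implicit Types (C : 'M[R]_n) (z : R[i]).

Lemma mem_eigenvalues C z :
  (z \in eigenvalues C) = root (char_poly (complexify C)) z.
Proof.
rewrite /eigenvalues; case: closed_field_poly_normal => r /= ->.
by rewrite (monicP (char_poly_monic _)) scale1r root_prod_XsubC.
Qed.

Lemma spectral_radius_ge0 C : 0 <= spectral_radius C.
Proof.
by rewrite /spectral_radius; elim: (eigenvalues C) => [|z r IHr];
  rewrite ?big_nil // big_cons le_max IHr orbT.
Qed.

Lemma normc_le_spectral_radius C z :
  root (char_poly (complexify C)) z -> normc z <= spectral_radius C.
Proof. by rewrite -mem_eigenvalues => z_eig; exact: le_bigmax_seq. Qed.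

Lemma spectral_radius_le C l : 0 <= l ->
    (forall z, root (char_poly (complexify C)) z -> normc z <= l) ->
  spectral_radius C <= l.
Proof.
move=> l_ge0 le_l; rewrite /spectral_radius big_seq_cond; apply: bigmax_le => // z.
by rewrite andbT mem_eigenvalues; exact: le_l.
Qed.

Lemma root_char_left_eigenvector C z : root (char_poly (complexify C)) z ->
  exists2 v : 'rV[R[i]]_n, (forall j, z * v 0 j = \sum_i v 0 i * (C i j)%:C%C) & v != 0.
Proof.
rewrite -eigenvalue_root_char => /eigenvalueP [v vC v_neq0]; exists v => // j.
have := congr1 (fun M : 'rV_n => M 0 j) vC; rewrite !mxE => <-.
by apply: eq_bigr => i _; rewrite mxE.
Qed.

Lemma normc_left_eigenvector_le C z (v : 'rV[R[i]]_n) j : nonneg_mx C ->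
    z * v 0 j = \sum_i v 0 i * (C i j)%:C%C ->
  normc z * normc (v 0 j) <= \sum_i normc (v 0 i) * C i j.
Proof.
move=> C_ge0 zv; rewrite -normcM zv; apply: le_trans (ler_normc_sum _ _) _.
by apply: ler_sum => i _; rewrite normcM normc_real ger0_norm.
Qed.

Lemma spectral_radius_le_subinvariant C (x : 'cV[R]_n) l :
    nonneg_mx C -> (forall i, 0 <= x i 0) -> 0 <= l ->
    (forall i, (C *m x) i 0 <= l * x i 0) ->
    (forall i j, x i 0 = 0 -> C i j = 0) ->
  spectral_radius C <= l.
Proof.
move=> C_ge0 x_ge0 l_ge0 Cx_le C_row0.
apply: spectral_radius_le => // z /root_char_left_eigenvector [v zv v_neq0].
pose w i := normc (v 0 i); pose s := \sum_i w i * x i 0.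
have wx_ge0 i : 0 <= w i * x i 0 by rewrite mulr_ge0 ?normc_ge0.
have zs_le : normc z * s <= l * s.
  rewrite /s mulr_sumr (le_trans (y := \sum_j (\sum_i w i * C i j) * x j 0)) //.
    by apply: ler_sum => j _; rewrite mulrA ler_wpM2r ?normc_left_eigenvector_le.
  under eq_bigr do rewrite mulr_suml; rewrite exchange_big mulr_sumr /=.
  apply: ler_sum => i _; rewrite mulrCA; under eq_bigr do rewrite -mulrA.
  rewrite -mulr_sumr ler_wpM2l ?normc_ge0 //.
  by have := Cx_le i; rewrite mxE.
have [s_gt0|s_le0] := ltP 0 s; first by rewrite -(ler_pM2r s_gt0).
have s0 : s = 0 by apply: le_anti; rewrite s_le0 sumr_ge0.
have wx0 i : w i * x i 0 = 0 := psumr_eq0P (fun i _ => wx_ge0 i) s0 isT.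
have [j vj_neq0] : exists j, v 0 j != 0.
  apply/existsP; apply: contraNT v_neq0; rewrite negb_exists => /forallP v0.
  by apply/eqP/rowP => j; rewrite mxE; apply/eqP/negbNE.
have /eqP : z * v 0 j = 0.
  rewrite zv big1 // => i _; have [xi0|xi_neq0] := eqVneq (x i 0) 0.
    by rewrite C_row0 // mulr0.
  have /eqP := wx0 i; rewrite mulf_eq0 (negbTE xi_neq0) orbF normc_eq0.
  by move=> /eqP ->; rewrite mul0r.
by rewrite mulf_eq0 (negbTE vj_neq0) orbF => /eqP ->; rewrite normc0.
Qed.


Lemma map_iter_mulmx C (x : 'cV[R]_n) k :
  map_mx (real_complex R) (iter k (mulmx C) x) =
  iter k (mulmx (complexify C)) (map_mx (real_complex R) x).
Proof. by elim: k => //= k <-; rewrite map_mxM. Qed.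

Lemma iter_mulmx_superinvariant C (x : 'cV[R]_n) l k i :
    nonneg_mx C -> 0 <= l -> (forall i, l * x i 0 <= (C *m x) i 0) ->
  l ^+ k * x i 0 <= (iter k (mulmx C) x) i 0.
Proof.
move=> C_ge0 l_ge0 Cx_ge; elim: k i => [|k IHk] i; first by rewrite expr0 mul1r.
rewrite exprSr -mulrA (le_trans (ler_wpM2l (exprn_ge0 k l_ge0) (Cx_ge i))) //=.
rewrite !mxE mulr_sumr; apply: ler_sum => j _.
by rewrite mulrCA ler_wpM2l.
Qed.

Lemma exists_col_gt0 (x : 'cV[R]_n) : (forall i, 0 <= x i 0) -> x != 0 ->
  exists i, 0 < x i 0.
Proof.
move=> x_ge0 x_neq0; apply/existsP; apply: contraNT x_neq0.
rewrite negb_exists => /forallP x_le0; apply/eqP/colP => i; rewrite mxE.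
by apply: le_anti; rewrite x_ge0 andbT leNgt x_le0.
Qed.

Lemma spectral_radius_ge_superinvariant C (x : 'cV[R]_n) l :
    nonneg_mx C -> (forall i, 0 <= x i 0) -> x != 0 ->
    (forall i, l * x i 0 <= (C *m x) i 0) ->
  l <= spectral_radius C.
Proof.
move=> C_ge0 x_ge0 x_neq0 Cx_ge.
have rho_ge0 := spectral_radius_ge0 C.
have [l_le0|l_gt0] := lerP l 0; first exact: le_trans l_le0 rho_ge0.
have [i0 xi0_gt0] := exists_col_gt0 x_ge0 x_neq0.
apply/ler_addgt0Pr => e e_gt0.
have rho_lt : spectral_radius C < spectral_radius C + e by rewrite ltrDl.
have [K growth] := iter_mulmx_normc_le (map_mx (real_complex R) x)
  (@normc_le_spectral_radius C) rho_lt.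
apply: (@ler_geometric _ (x i0 0) K) => // [|k]; first exact: le_lt_trans rho_lt.
rewrite mulrC; apply: le_trans (iter_mulmx_superinvariant k i0 C_ge0 (ltW l_gt0) Cx_ge) _.
by apply: le_trans (growth k i0); rewrite -map_iter_mulmx mxE normc_real ler_norm.
Qed.

End SpectralRadius.

Section PerronComparison.
Variables (R : realType) (n : nat).
Implicit Types (A B : 'M[R]_n) (x : 'cV[R]_n).

Lemma in_Omega_refl A : nonneg_mx A -> in_Omega A A.
Proof. by split=> // i; exists 1%g => j; rewrite perm1. Qed.

Lemma in_Omega_mulmx A B x i : in_Omega A B ->
  exists s : 'S_n, (B *m x) i 0 = \sum_j A i (s j) * x j 0.
Proof.
by case=> _ /(_ i) [s Bs]; exists s; rewrite mxE; apply: eq_bigr => j _; rewrite Bs.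
Qed.

Lemma similarly_ordered_eq0 (a x : 'I_n -> R) j0 :
    (forall k, 0 <= a k) -> (forall k, 0 <= x k) -> 0 < x j0 ->
    (forall j k, x k < x j -> a k <= a j) -> \sum_k a k * x k = 0 ->
  forall k, a k = 0.
Proof.
move=> a_ge0 x_ge0 xj0_gt0 ord ax_sum0.
have ax0 k : a k * x k = 0.
  exact: psumr_eq0P (fun k _ => mulr_ge0 (a_ge0 k) (x_ge0 k)) ax_sum0 k isT.
have a_eq0 k : 0 < x k -> a k = 0.
  move=> xk_gt0; have /eqP := ax0 k.
  by rewrite mulf_eq0 (gt_eqF xk_gt0) orbF => /eqP.
move=> k; have [xk_lt|xk_ge] := ltP (x k) (x j0); last exact/a_eq0/(lt_le_trans xj0_gt0).
by apply: le_anti; rewrite a_ge0 andbT -(a_eq0 j0 xj0_gt0) ord.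
Qed.

End PerronComparison.

Theorem theorem3p3 (R : realType) (n : nat) (A : 'M[R]_n) (x : 'cV[R]_n) :
  nonneg_mx A -> perron_eigenvector A x ->
  ((forall i j k : 'I_n, x k 0 < x j 0 -> A i k <= A i j) ->
     in_Omega A A /\ forall B, in_Omega A B -> spectral_radius B <= spectral_radius A)
  /\
  ((forall i j k : 'I_n, x k 0 < x j 0 -> A i j <= A i k) ->
     in_Omega A A /\ forall B, in_Omega A B -> spectral_radius A <= spectral_radius B).
Proof.
move=> A_ge0 [x_neq0 [x_ge0 Ax]].
have AxE i : \sum_j A i j * x j 0 = spectral_radius A * x i 0.
  by have := congr1 (fun v : 'cV_n => v i 0) Ax; rewrite !mxE.
have [j0 xj0_gt0] := exists_col_gt0 x_ge0 x_neq0.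
split=> ord; (split=> [|B B_Omega]; first exact: in_Omega_refl).
  have [B_ge0 B_rows] := B_Omega.
  apply: (spectral_radius_le_subinvariant B_ge0 x_ge0 (spectral_radius_ge0 A)).
    move=> i; have [s ->] := in_Omega_mulmx x i B_Omega; rewrite -AxE.
    exact: rearrangement_le (ord i).
  move=> i j xi0; have [s ->] := B_rows i.
  apply: (similarly_ordered_eq0 (A_ge0 i) (fun k => x_ge0 k) xj0_gt0 (ord i)).
  by rewrite AxE xi0 mulr0.
apply: (spectral_radius_ge_superinvariant B_Omega.1 x_ge0 x_neq0) => i.
have [s ->] := in_Omega_mulmx x i B_Omega; rewrite -AxE.
exact: rearrangement_ge (ord i).
Qed.
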